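(* With $P_\lambda$ and its concave hull $\bar P_\lambda$ as below: (a) if $0\le\lambda'<\lambda<1$ and $P_\lambda(q)<\bar P_\lambda(q)$, then $P_{\lambda'}(q)<\bar P_{\lambda'}(q)$; (b) if $1<\lambda<\lambda'$ and $P_\lambda(q)<\bar P_\lambda(q)$, then $P_{\lambda'}(q)<\bar P_{\lambda'}(q)$.
   Context: $F$ is a value distribution (support $[v_L,v_H]$ or $[v_L,\infty)$, $v_L\ge0$, atomless except possibly at $v_H$, finite mean). The value function is $v(q)=\inf\{v:F(v)>1-q\}$ for $q\in[0,1]$ (nonincreasing, nonnegative). For $\lambda\ge0$, $P_\lambda(q)=\lambda\int_0^qv(t)\,dt+(1-\lambda)\,q\,v(q)$ on $[0,1]$, and $\bar P_\lambda$ denotes the concave hull (smallest concave majorant) of $P_\lambda$ on $[0,1]$. *)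

From HB Require Import structures.
From mathcomp Require Import all_boot all_order all_algebra.
From mathcomp Require Import all_classical all_reals all_analysis.
Set Implicit Arguments. Unset Strict Implicit. Unset Printing Implicit Defensive.
Import Order.TTheory GRing.Theory Num.Theory numFieldNormedType.Exports.
Local Open Scope classical_set_scope.
Local Open Scope ring_scope.

(* F is a value distribution (CDF) with support [vL, vH] (vH finite) or
   [vL, +oo) (vH = +oo), vL >= 0, atomless except possibly at vH,
   finite mean. *)
Definition value_distribution (R : realType) (F : R -> R) (vL : R)
    (vH : \bar R) : Prop :=
  (0 <= vL) /\ (vL%:E <= vH)%E /\
  {homo F : x y / x <= y} /\
  (forall x, x < vL -> F x = 0) /\
  (* every point of [vL, vH] is in the support *)
  (forall x y, vL <= x -> x < y -> (y%:E <= vH)%E -> F x < F y) /\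
  (forall x, (vH <= x%:E)%E -> F x = 1) /\
  (F x @[x --> +oo%R] --> (1 : R)) /\
  (* atomless except possibly at vH (right-continuity at vH follows
     from the previous conditions) *)
  (forall x, x%:E != vH -> {for x, continuous F}) /\
  (* finite mean: E[X] = int_0^oo (1 - F x) dx for X >= 0 *)
  (\int[lebesgue_measure]_(x in `[0%R, +oo[) (1 - F x)%:E < +oo)%E.

Definition value_fun (R : realType) (F : R -> R) (q : R) : R :=
  inf [set x : R | 1 - q < F x].

Definition Plam (R : realType) (F : R -> R) (lam : R) (q : R) : R :=
  lam * fine (\int[lebesgue_measure]_(t in `[0%R, q]) (value_fun F t)%:E)
  + (1 - lam) * q * value_fun F q.

Definition concave01 (R : realType) (g : R -> R) : Prop :=
  forall x y t, 0 <= x <= 1 -> 0 <= y <= 1 -> 0 <= t <= 1 ->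
    t * g x + (1 - t) * g y <= g (t * x + (1 - t) * y).

Definition concave_hull (R : realType) (P : R -> R) (q : R) : R :=
  inf [set g q | g in [set g : R -> R |
         concave01 g /\ (forall x, 0 <= x <= 1 -> P x <= g x)]].

(* Write I(q) = int_0^q v and P_lam = lam I + (1 - lam) q v(q).  Eliminating
   q v(q) between two values of lam gives P_lam' = c P_lam - d I with
     c = (1 - lam') / (1 - lam)  and  d = (lam - lam') / (1 - lam),
   and in both regimes of the proposition c > 0 and d >= 0.  As v is
   nonnegative and nonincreasing, I is nonnegative and concave, so for every
   concave majorant g of P_lam' the function (g + d I) / c is a concave
   majorant of P_lam.  Hence c hull(P_lam) - d I <= hull(P_lam'), and a strict
   gap P_lam(q) < hull(P_lam)(q) survives the passage to lam'. *)

From HB Require Import structures.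
From mathcomp Require Import all_boot all_order all_algebra.
From mathcomp Require Import all_classical all_reals all_analysis.
From mathcomp Require Import ring lra measurable_realfun.
Import Order.TTheory GRing.Theory Num.Theory numFieldNormedType.Exports.
Set Implicit Arguments.
Unset Strict Implicit.
Unset Printing Implicit Defensive.

Local Open Scope ring_scope.
Local Open Scope classical_set_scope.

Section ConcaveHull.
Variable R : realType.
Implicit Types (P D g h : R -> R) (c q : R).

Definition concave_majorants P : set (R -> R) :=
  [set g | concave01 g /\ (forall x, 0 <= x <= 1 -> P x <= g x)].

Lemma concave01D g h : concave01 g -> concave01 h ->
  concave01 (fun x => g x + h x).
Proof.
move=> cg ch x y t x01 y01 t01.
have := cg x y t x01 y01 t01; have := ch x y t x01 y01 t01; lra.
Qed.

Lemma concave01Z c g : 0 <= c -> concave01 g -> concave01 (fun x => c * g x).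
Proof.
move=> c0 cg x y t x01 y01 t01.
rewrite mulrCA [_ * (c * _)]mulrCA -mulrDr.
by rewrite ler_wpM2l // cg.
Qed.

Lemma concave_hull_le P g q : concave_majorants P g -> 0 <= q <= 1 ->
  concave_hull P q <= g q.
Proof.
move=> Pg q01; apply: ge_inf; last by exists g.
by exists (P q) => _ [h [_ Ph] <-]; exact: Ph.
Qed.

Lemma concave_hull_shift P D c q : 0 < c -> concave01 D ->
  (forall x, 0 <= x <= 1 -> 0 <= D x) -> 0 <= q <= 1 ->
  c * concave_hull P q - D q <= concave_hull (fun x => c * P x - D x) q.
Proof.
move=> c0 cD D0 q01.
set P' := fun x => c * P x - D x.
have [[g0 P'g0]|noP'] := pselect (exists g, concave_majorants P' g); last first.
  (* Then both hulls are [inf set0 = 0]. *)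
  have noP g : ~ concave_majorants P g.
    move=> [cg Pg]; apply: noP'; exists (fun x => c * g x); split.
      exact: concave01Z (ltW c0) cg.
    by move=> x x01; have := Pg x x01; have := D0 x x01; rewrite /P'; nra.
  rewrite /concave_hull -/(concave_majorants P) -/(concave_majorants P').
  have -> : concave_majorants P = set0 by apply/seteqP; split=> // g /noP.
  have -> : concave_majorants P' = set0.
    by apply/seteqP; split=> // g P'g; apply: noP'; exists g.
  by rewrite image_set0 inf0 mulr0 sub0r oppr_le0 D0.
apply: lb_le_inf; first by exists (g0 q), g0.
move=> _ [g [cg P'g] <-].
have Ph : concave_majorants P (fun x => c^-1 * (g x + D x)).
  split; first by apply/concave01Z/concave01D => //; rewrite invr_ge0 ltW.
  move=> x x01; rewrite ler_pdivlMl //.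
  by have := P'g x x01; rewrite /P'; lra.
have := concave_hull_le Ph q01.
by rewrite ler_pdivlMl // -lerBlDr.
Qed.

End ConcaveHull.

Lemma nonincreasing_in_itv_measurable (R : realType) (i : interval R)
    (f : R -> R) :
  {in i &, {homo f : s t /~ s <= t}} -> measurable_fun [set` i] f.
Proof.
move=> f_ni; apply: (measurability (@RGenCInfty.G R)) => [|/= _ [_] [r] -> <-].
  exact: RGenCInfty.measurableE.
apply: is_interval_measurable => s t [/= si] + [/= ti] + u /andP[su ut].
move=> _; rewrite /= in_itv /= andbT => rt.
have ui : u \in i by apply: (interval_is_interval si ti); rewrite su ut.
by split=> //=; rewrite in_itv /= andbT (le_trans rt) // f_ni.
Qed.

Lemma integral_itv_oc_cst (R : realType) (a b c : R) : a < b ->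
  (\int[lebesgue_measure]_(t in `]a, b]) c%:E = ((b - a) * c)%:E)%E.
Proof.
move=> ab; rewrite integral_cst //.
have := lebesgue_measure_itv `]a, b]%O; rewrite /= lte_fin ab => ->.
by rewrite -EFinD -EFinM mulrC.
Qed.

Section NonincreasingIntegral.
Variables (R : realType) (v : R -> R).
Hypothesis v_ge0 : forall t, 0 <= t <= 1 -> 0 <= v t.
Hypothesis v_ni : forall s t, 0 < s -> s <= t -> t <= 1 -> v t <= v s.
Implicit Types a b x y t : R.

Local Notation integral0 a :=
  (\int[lebesgue_measure]_(t in `[0%R, a%R]) (v t)%:E)%E.
Local Notation integral_oc a b :=
  (\int[lebesgue_measure]_(t in `]a, b]) (v t)%:E)%E.

Lemma measurable_fun_itv01 : measurable_fun (`[0, 1] : set R) v.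
Proof.
rewrite (@itv_bndbnd_setU _ _ (BLeft 0) (BRight 0) (BRight 1)) ?bnd_simp //.
rewrite set_itv1; apply/measurable_funU => //; split.
  exact: measurable_fun_set1.
apply: nonincreasing_in_itv_measurable => s t; rewrite !in_itv /=.
by move=> /andP[_ s1] /andP[t0 _] ts; apply: v_ni.
Qed.

Lemma measurable_fun_sub01 (D : set R) : measurable D -> D `<=` `[0, 1] ->
  measurable_fun D (fun t => (v t)%:E).
Proof.
move=> mD D01; apply/measurable_EFinP.
exact: measurable_funS measurable_fun_itv01.
Qed.

Lemma integral0_split a b : 0 <= a -> a <= b -> b <= 1 ->
  integral0 b = (integral0 a + integral_oc a b)%E.
Proof.
move=> a0 ab b1.
have -> : `[0, b] = `[0, a] `|` `]a, b] :> set R.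
  by rewrite -(@itv_bndbnd_setU _ _ _ (BRight a)) ?bnd_simp.
rewrite ge0_integral_setU //.
- apply: measurable_fun_sub01; first exact: measurableU.
  by move=> x /=; rewrite !in_itv /=; case=> /andP[? ?]; apply/andP; split; lra.
- move=> x /=; rewrite !in_itv /= => xab; rewrite lee_fin; apply: v_ge0.
  by case: xab => /andP[? ?]; apply/andP; split; lra.
- rewrite disj_set2E; apply/eqP/seteqP; split => x //= [].
  by rewrite !in_itv /= => /andP[? ?] /andP[? ?]; lra.
Qed.

Lemma integral_oc_ge a b : 0 <= a -> a < b -> b <= 1 ->
  (((b - a) * v b)%:E <= integral_oc a b)%E.
Proof.
move=> a0 ab b1; rewrite -integral_itv_oc_cst //.
have in01 x : a < x <= b -> 0 <= x <= 1.
  by case/andP=> ? ?; apply/andP; split; lra.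
apply: ge0_le_integral => //.
- by move=> x _; rewrite lee_fin v_ge0 // in01 // ab lexx.
- by apply: measurable_fun_sub01 => // x; rewrite /= !in_itv /= => /in01.
- by move=> x; rewrite /= in_itv /= => /andP[? ?]; rewrite lee_fin v_ni //; lra.
Qed.

Lemma integral_oc_le a b : 0 < a -> a < b -> b <= 1 ->
  (integral_oc a b <= ((b - a) * v a)%:E)%E.
Proof.
move=> a0 ab b1; rewrite -integral_itv_oc_cst //.
have in01 x : a < x <= b -> 0 <= x <= 1.
  by case/andP=> ? ?; apply/andP; split; lra.
apply: ge0_le_integral => //.
- by move=> x; rewrite /= in_itv /= => /in01; rewrite lee_fin; exact: v_ge0.
- by apply: measurable_fun_sub01 => // x; rewrite /= !in_itv /= => /in01.
- by move=> x; rewrite /= in_itv /= => /andP[? ?]; rewrite lee_fin v_ni //; lra.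
Qed.

Lemma integral0_ge0 a : a <= 1 -> (0 <= integral0 a)%E.
Proof.
move=> a1; apply: integral_ge0 => x /=; rewrite in_itv /= => /andP[? ?].
by rewrite lee_fin v_ge0 //; apply/andP; split; lra.
Qed.

Lemma integral_oc_fin_num a b : 0 < a -> a < b -> b <= 1 ->
  integral_oc a b \is a fin_num.
Proof.
move=> a0 ab b1; rewrite ge0_fin_numE; last first.
  apply: integral_ge0 => x /=; rewrite in_itv /= => /andP[? ?].
  by rewrite lee_fin v_ge0 //; apply/andP; split; lra.
exact: le_lt_trans (integral_oc_le a0 ab b1) (ltry _).
Qed.

Lemma integral0_fin_numE a b : 0 < a -> a < b -> b <= 1 ->
  (integral0 b \is a fin_num) = (integral0 a \is a fin_num).
Proof.
move=> a0 ab b1.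
rewrite (integral0_split (ltW a0) (ltW ab) b1) fin_numD.
by rewrite integral_oc_fin_num ?andbT.
Qed.

Lemma integral0_chord x y t : 0 <= x -> x < y -> y <= 1 -> 0 < t < 1 ->
  t * fine (integral0 x) + (1 - t) * fine (integral0 y) <=
  fine (integral0 (t * x + (1 - t) * y)).
Proof.
move=> x0 xy y1 /andP[t0 t1].
set z := t * x + (1 - t) * y.
have xz : x < z by rewrite /z; nra.
have zy : z < y by rewrite /z; nra.
have z0 : 0 < z by lra.
have [Jz_fin|Jz_nfin] := boolP (integral0 z \is a fin_num); last first.
  (* A divergent integral diverges on all of ]0, 1], so every [fine] is 0. *)
  have fine_nfin w : integral0 w \isn't a fin_num -> fine (integral0 w) = 0.
    by case/fin_numPn => ->.
  have -> : fine (integral0 x) = 0.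
    have [->|x_neq0] := eqVneq x 0; first by rewrite set_itv1 integral_set1.
    by apply: fine_nfin; rewrite -(integral0_fin_numE _ xz) //; lra.
  by rewrite !fine_nfin ?(integral0_fin_numE z0 zy y1) // !mulr0 addr0.
have Jz := integral0_split x0 (ltW xz) (ltW (lt_le_trans zy y1)).
have Jy := integral0_split (ltW z0) (ltW zy) y1.
have Kzy_fin := integral_oc_fin_num z0 zy y1.
have := Jz_fin; rewrite Jz fin_numD => /andP[Jx_fin Kxz_fin].
rewrite Jy (fineD Jz_fin Kzy_fin) Jz (fineD Jx_fin Kxz_fin).
have vz0 : 0 <= v z by apply: v_ge0; apply/andP; split; lra.
have Kxz_ge : (z - x) * v z <= fine (integral_oc x z).
  by rewrite -lee_fin fineK // integral_oc_ge //; lra.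
have Kzy_le : fine (integral_oc z y) <= (y - z) * v z.
  by rewrite -lee_fin fineK // integral_oc_le.
(* v >= v z on ]x, z] and v <= v z on ]z, y], two intervals of equal weight. *)
have same_mass : (1 - t) * ((y - z) * v z) = t * ((z - x) * v z).
  by rewrite /z; ring.
have t1' : 0 <= 1 - t by lra.
have := ler_wpM2l t1' Kzy_le.
have := ler_wpM2l (ltW t0) Kxz_ge.
lra.
Qed.

Lemma integral0_concave : concave01 (fun q => fine (integral0 q)).
Proof.
move=> x y t /andP[x0 x1] /andP[y0 y1] /andP[t0 t1].
have [->|t_neq0] := eqVneq t 0; first by rewrite subr0 !mul0r !mul1r !add0r.
have [->|t_neq1] := eqVneq t 1; first by rewrite subrr !mul0r !mul1r !addr0.
have t01 : 0 < t < 1 by rewrite !lt_neqAle eq_sym t_neq0 t_neq1 t0 t1.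
have t01' : 0 < 1 - t < 1 by apply/andP; split; lra.
have [xy|yx|<-] := ltgtP x y.
- exact: integral0_chord.
- have := integral0_chord y0 yx x1 t01'.
  by rewrite subKr addrC [_ * y + _]addrC.
- by rewrite -!mulrDl addrC subrK !mul1r.
Qed.

End NonincreasingIntegral.

Section ValueFunction.
Variables (R : realType) (F : R -> R) (vL : R) (vH : \bar R).
Hypothesis hF : value_distribution F vL vH.

Lemma value_set_lbound q : q <= 1 -> lbound [set x | 1 - q < F x] vL.
Proof.
case: hF => _ [_ [_ [F_below _]]] q1 x /= Fx.
by rewrite leNgt; apply/negP => /F_below F0; move: Fx; rewrite F0; lra.
Qed.

Lemma value_set_neq0 q : 0 < q -> [set x | 1 - q < F x] !=set0.
Proof.
case: hF => _ [_ [_ [_ [_ [_ [F_cvg1 _]]]]]] q0.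
have q1 : 1 - q < 1 by lra.
by have [M _ FM] := pinfty_ex_gt (num_real 0) (cvgr_gt 1 F_cvg1 _ q1); exists M.
Qed.

Lemma value_fun_ge0 q : q <= 1 -> 0 <= value_fun F q.
Proof.
case: hF => vL0 _ q1; rewrite /value_fun.
have [->|/set0P ne] := eqVneq [set x | 1 - q < F x] set0; first by rewrite inf0.
exact: le_trans vL0 (lb_le_inf ne (value_set_lbound q1)).
Qed.

Lemma value_fun_noninc s t : 0 < s -> s <= t -> t <= 1 ->
  value_fun F t <= value_fun F s.
Proof.
move=> s0 st t1; rewrite /value_fun.
apply: lb_le_inf (value_set_neq0 s0) _ => x /= Fx.
apply: ge_inf; first by exists vL; exact: value_set_lbound.
rewrite /=; lra.
Qed.

End ValueFunction.

Lemma Plam_reparam (R : realType) (F : R -> R) (lam lam' : R) : lam != 1 ->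
  Plam F lam' = (fun x => (1 - lam') / (1 - lam) * Plam F lam x -
    (lam - lam') / (1 - lam) *
    fine (\int[lebesgue_measure]_(t in `[0%R, x]) (value_fun F t)%:E)).
Proof.
move=> lam_neq1; apply/funext => x; rewrite /Plam.
by field; rewrite subr_eq0 eq_sym.
Qed.

Lemma Plam_gap_transfer (R : realType) (F : R -> R) vL vH (q lam lam' : R) :
  value_distribution F vL vH -> 0 <= q <= 1 ->
  0 < (1 - lam') / (1 - lam) -> 0 <= (lam - lam') / (1 - lam) ->
  Plam F lam q < concave_hull (Plam F lam) q ->
  Plam F lam' q < concave_hull (Plam F lam') q.
Proof.
move=> hF q01 c0 d0 gap.
have lam_neq1 : lam != 1.
  by apply: contraTneq c0 => ->; rewrite subrr invr0 mulr0 ltxx.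
have v_ge0 (t : R) : 0 <= t <= 1 -> 0 <= value_fun F t.
  by case/andP=> _ t1; exact: (value_fun_ge0 hF t1).
have I_concave := integral0_concave v_ge0 (value_fun_noninc hF).
rewrite (Plam_reparam F lam' lam_neq1).
set I := fun x => fine _ in I_concave.
have D0 x : 0 <= x <= 1 -> 0 <= (lam - lam') / (1 - lam) * I x.
  by case/andP=> _ x1; rewrite mulr_ge0 // fine_ge0 // integral0_ge0.
apply: lt_le_trans (concave_hull_shift _ c0 (concave01Z d0 I_concave) D0 q01).
by rewrite ltrD2r ltr_pM2l.
Qed.

Theorem propositionB2 (R : realType) (F : R -> R) (vL : R) (vH : \bar R)
  (q : R) :
  value_distribution F vL vH -> 0 <= q <= 1 ->
  (forall lam lam' : R, 0 <= lam' -> lam' < lam -> lam < 1 ->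
     Plam F lam q < concave_hull (Plam F lam) q ->
     Plam F lam' q < concave_hull (Plam F lam') q) /\
  (forall lam lam' : R, 1 < lam -> lam < lam' ->
     Plam F lam q < concave_hull (Plam F lam) q ->
     Plam F lam' q < concave_hull (Plam F lam') q).
Proof.
move=> hF q01; split=> lam lam' *.
all: apply: (Plam_gap_transfer (lam := lam) hF q01) => //.
- by apply: divr_gt0; lra.
- by apply: divr_ge0; lra.
- by rewrite -divrNN !opprB; apply: divr_gt0; lra.
- by rewrite -divrNN !opprB; apply: divr_ge0; lra.
Qed.
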